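(* For any fixed $k\ge 3$, as $t\to\infty$, $$\Pr\big(|Z_k(t) - \mathbb{E}[Z_k(t)]| \geq \sqrt{t\log t}\big) = o(1),$$ where $Z_k(t)$ is the number of vertices of degree $k$ in a Random Apollonian Network after $t$ steps.
   Context: A Random Apollonian Network (RAN) is generated as follows: start (at time $t=0$) with a single triangular face. At each step $t=1,2,\dots$, pick one of the current (bounded) triangular faces uniformly at random, insert a new vertex inside it, and connect it to the three vertices on the boundary of that face, subdividing the face into three new triangular faces. $Z_k(t)$ denotes the number of vertices of degree exactly $k$ after $t$ steps. *)

From HB Require Import structures.
From mathcomp Require Import all_boot all_order all_algebra.
From mathcomp Require Import all_classical all_reals all_analysis.
Set Implicit Arguments. Unset Strict Implicit. Unset Printing Implicit Defensive.
Import Order.TTheory GRing.Theory Num.Theory.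

(* Random Apollonian Network, encoded by the sequence of uniform choices.
   Vertices are labelled by nat: the initial triangle is 0,1,2; the vertex
   inserted at step n+1 (n = number of steps already done) is n+3.
   A state is (list of current bounded triangular faces, list of edges). *)

Definition ran_state := (seq (nat * nat * nat) * seq (nat * nat))%type.

Definition ran_init : ran_state := ([:: (0, 1, 2)], [:: (0, 1); (1, 2); (0, 2)]).

Definition ran_step (n : nat) (st : ran_state) (i : nat) : ran_state :=
  let v := (n + 3)%N in
  let '(a, b, c) := nth (0, 1, 2) st.1 i in
  (take i st.1 ++ drop i.+1 st.1 ++ [:: (a, b, v); (b, c, v); (a, c, v)],
   [:: (a, v); (b, v); (c, v)] ++ st.2).

Fixpoint ran_build_aux (n : nat) (cs : seq nat) (st : ran_state) : ran_state :=
  match cs with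
  | [::] => st
  | i :: cs' => ran_build_aux n.+1 cs' (ran_step n st i)
  end.

Definition ran_build (cs : seq nat) : ran_state := ran_build_aux 0 cs ran_init.

(* All admissible choice sequences of length t: before step n+1 there are
   2n+1 faces, and the choice at that step is an index in [0, 2n]. Each
   sequence has probability 1 / (1*3*5*...*(2t-1)): the uniform choices. *)
Fixpoint ran_choices (t : nat) : seq (seq nat) :=
  match t with
  | 0 => [:: [::]]
  | t'.+1 => [seq rcons c i | c <- ran_choices t', i <- iota 0 (2 * t').+1]
  end.

Definition ran_degree (E : seq (nat * nat)) (u : nat) : nat :=
  count (fun e => (e.1 == u) || (e.2 == u)) E.

Definition ranZ (k : nat) (cs : seq nat) : nat :=
  count (fun u => ran_degree (ran_build cs).2 u == k) (iota 0 (size cs + 3)).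

Local Open Scope ring_scope.

Definition ran_prob (R : realType) (t : nat) (P : seq nat -> bool) : R :=
  (count P (ran_choices t))%:R / (size (ran_choices t))%:R.

Definition ran_expect (R : realType) (t : nat) (X : seq nat -> nat) : R :=
  (\sum_(c <- ran_choices t) (X c)%:R) / (size (ran_choices t))%:R.

From HB Require Import structures.
From mathcomp Require Import all_boot all_order all_algebra.
From mathcomp Require Import all_classical all_reals all_analysis.
From mathcomp Require Import zify ring lra.
Import Order.TTheory GRing.Theory Num.Theory numFieldNormedType.Exports.
Set Implicit Arguments. Unset Strict Implicit. Unset Printing Implicit Defensive.

(* Let M_n be the conditional expectation of Z_k(t) given the first n face
   choices (a Doob martingale).  Changing the n-th choice moves M_n by at
   most 6: run both networks with the same later face indices; then they
   differ only by relabelling the six corners of the two chosen faces, so at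
   most six vertices get different degrees.  Hence Var Z_k(t) <= 36 t and
   Chebyshev bounds the probability by 36 / log t.  The argument works for
   every k. *)

Fixpoint ran_future (n r : nat) : seq (seq nat) :=
  match r with
  | 0 => [:: [::]]
  | r'.+1 => [seq i :: c | i <- iota 0 (2 * n).+1, c <- ran_future n.+1 r']
  end.

Lemma ran_futureS n r :
  ran_future n r.+1 = [seq i :: c | i <- iota 0 (2 * n).+1, c <- ran_future n.+1 r].
Proof. by []. Qed.

Lemma allpairs_cons_rcons (T : Type) (I J : seq T) (F : seq (seq T)) :
  [seq i :: c | i <- I, c <- [seq rcons c' j | c' <- F, j <- J]] =
  [seq rcons c j | c <- [seq i :: c' | i <- I, c' <- F], j <- J].
Proof.
elim: I => [|i I IH] //=.
by rewrite allpairs_cat -IH allpairs_mapl map_allpairs.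
Qed.

Lemma ran_future_rcons n r :
  ran_future n r.+1 =
  [seq rcons c i | c <- ran_future n r, i <- iota 0 (2 * (n + r)).+1].
Proof.
elim: r n => [|r IH] n; first by rewrite /= addn0 allpairs1r cats0.
by rewrite ran_futureS IH allpairs_cons_rcons addSnnS.
Qed.

Lemma ran_choicesE t : ran_choices t = ran_future 0 t.
Proof. by elim: t => [|t IH] //; rewrite ran_future_rcons /= IH. Qed.

Lemma big_ran_future_S (R : Type) (idx : R) (op : Monoid.law idx)
    (F : seq nat -> R) n r :
  \big[op/idx]_(c <- ran_future n r.+1) F c =
  \big[op/idx]_(i <- iota 0 (2 * n).+1) \big[op/idx]_(c <- ran_future n.+1 r) F (i :: c).
Proof. by rewrite ran_futureS big_allpairs_dep. Qed.

Lemma size_ran_future_S n r :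
  size (ran_future n r.+1) = (2 * n).+1 * size (ran_future n.+1 r).
Proof. by rewrite ran_futureS size_allpairs size_iota. Qed.

Lemma size_ran_future_gt0 n r : 0 < size (ran_future n r).
Proof. by elim: r n => [|r IH] n //; rewrite size_ran_future_S muln_gt0 IH. Qed.

Lemma size_mem_ran_future n r c : c \in ran_future n r -> size c = r.
Proof.
elim: r n c => [|r IH] n c; first by rewrite inE => /eqP ->.
by rewrite ran_futureS => /allpairsPdep[i [c' [_ hc ->]]] /=; rewrite (IH _ _ hc).
Qed.

Definition deg_count (k T : nat) (E : seq (nat * nat)) : nat :=
  count (fun u => ran_degree E u == k) (iota 0 (T + 3)).

Definition future_Z (k T n : nat) (st : ran_state) (c : seq nat) : nat :=
  deg_count k T (ran_build_aux n c st).2.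

Definition future_sum (k T r n : nat) (st : ran_state) : nat :=
  \sum_(c <- ran_future n r) future_Z k T n st c.

Lemma future_sum0 k T n st : future_sum k T 0 n st = deg_count k T st.2.
Proof. by rewrite /future_sum big_seq1. Qed.

Lemma future_sumS k T r n st :
  future_sum k T r.+1 n st =
  \sum_(i <- iota 0 (2 * n).+1) future_sum k T r n.+1 (ran_step n st i).
Proof. exact: big_ran_future_S. Qed.

Definition new_faces (f : nat * nat * nat) (v : nat) : seq (nat * nat * nat) :=
  [:: (f.1.1, f.1.2, v); (f.1.2, f.2, v); (f.1.1, f.2, v)].

Definition new_edges (f : nat * nat * nat) (v : nat) : seq (nat * nat) :=
  [:: (f.1.1, v); (f.1.2, v); (f.2, v)].

Lemma ran_stepE n L E i :
  ran_step n (L, E) i =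
  (take i L ++ drop i.+1 L ++ new_faces (nth (0, 1, 2) L i) (n + 3),
   new_edges (nth (0, 1, 2) L i) (n + 3) ++ E).
Proof. by rewrite /ran_step /=; case: (nth _ _ _) => [[a b] c]. Qed.

Lemma perm_rem (T : eqType) (x : T) s1 s2 :
  perm_eq s1 s2 -> perm_eq (rem x s1) (rem x s2).
Proof. by move=> p; apply/permP => P; rewrite !count_rem (permP p) (perm_mem p). Qed.

Lemma perm_take_drop_rem (T : eqType) (x0 : T) (L : seq T) i : i < size L ->
  perm_eq (take i L ++ drop i.+1 L) (rem (nth x0 L i) L).
Proof.
move=> hi; rewrite -(perm_cons (nth x0 L i)).
apply: perm_trans (perm_to_rem (mem_nth x0 hi)).
rewrite -cat1s perm_catCA /= -drop_nth //.
by rewrite cat_take_drop.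
Qed.

(* Uniform choice of the face makes the order of the face list irrelevant. *)
Lemma future_sum_perm k T r n L L' E :
  perm_eq L L' -> size L = (2 * n).+1 ->
  future_sum k T r n (L, E) = future_sum k T r n (L', E).
Proof.
elim: r n L L' E => [|r IH] n L L' E hp hs; first by rewrite !future_sum0.
have hs' : size L' = (2 * n).+1 by rewrite -(perm_size hp).
pose H (M : seq (nat * nat * nat)) x :=
  future_sum k T r n.+1 (rem x M ++ new_faces x (n + 3), new_edges x (n + 3) ++ E).
have sum_faces M : size M = (2 * n).+1 ->
    \sum_(i <- iota 0 (2 * n).+1) future_sum k T r n.+1 (ran_step n (M, E) i)
    = \sum_(x <- M) H M x.
  move=> hM; rewrite (big_nth (0, 1, 2)) /index_iota subn0 hM.
  apply: eq_big_seq => i; rewrite mem_iota /= => hi.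
  rewrite ran_stepE; apply: IH.
    by rewrite catA perm_cat2r; apply: perm_take_drop_rem; rewrite hM.
  by rewrite !size_cat size_take size_drop hM hi /=; lia.
rewrite !future_sumS (sum_faces _ hs) (sum_faces _ hs') (perm_big _ hp) /=.
apply: eq_big_seq => x hx; apply: IH; first by rewrite perm_cat2r perm_rem.
by rewrite size_cat size_rem ?hs ?(perm_mem hp) //=; lia.
Qed.

Section All2.
Variables (A : Type) (r : A -> A -> bool).

Lemma all2_refl s : (forall x, r x x) -> all2 r s s.
Proof. by move=> h; elim: s => //= x s ->; rewrite h. Qed.

Lemma all2_take i s t : all2 r s t -> all2 r (take i s) (take i t).
Proof.
elim: s t i => [|x s IH] [|y t] [|i] //= /andP[-> h].
by rewrite IH.
Qed.

Lemma all2_drop i s t : all2 r s t -> all2 r (drop i s) (drop i t).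
Proof. by elim: s t i => [|x s IH] [|y t] [|i] //= /andP[_ /IH]. Qed.

Lemma all2_nth x0 i s t : r x0 x0 -> all2 r s t -> r (nth x0 s i) (nth x0 t i).
Proof.
move=> h0; elim: s t i => [|x s IH] [|y t] [|i] //= /andP[// h1 h2].
exact: IH.
Qed.

Lemma all2_cat s1 s2 t1 t2 :
  all2 r s1 t1 -> all2 r s2 t2 -> all2 r (s1 ++ s2) (t1 ++ t2).
Proof. by elim: s1 t1 => [|x s IH] [|y t] //= /andP[-> /IH]. Qed.

End All2.

(* The coupling identifies two vertex labels when they are equal or both lie
   in a set S of vertices whose degrees are not tracked. *)
Definition agree_off (S : seq nat) (a b : nat) := (a == b) || (a \in S) && (b \in S).

Definition face_agree_off (S : seq nat) (f g : nat * nat * nat) :=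
  [&& agree_off S f.1.1 g.1.1, agree_off S f.1.2 g.1.2 & agree_off S f.2 g.2].

Lemma agree_off_refl S a : agree_off S a a.
Proof. by rewrite /agree_off eqxx. Qed.

Lemma face_agree_off_refl S f : face_agree_off S f f.
Proof. by rewrite /face_agree_off !agree_off_refl. Qed.

Lemma agree_off_eq S a b u : agree_off S a b -> u \notin S -> (a == u) = (b == u).
Proof.
case/orP=> [/eqP -> //|/andP[ha hb] hu].
by rewrite (negbTE (memPn hu _ ha)) (negbTE (memPn hu _ hb)).
Qed.

Lemma ran_degree_cat E1 E2 u :
  ran_degree (E1 ++ E2) u = ran_degree E1 u + ran_degree E2 u.
Proof. exact: count_cat. Qed.

Lemma ran_degree_new_edges S f g v u : face_agree_off S f g -> u \notin S ->
  ran_degree (new_edges f v) u = ran_degree (new_edges g v) u.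
Proof.
case/and3P=> h1 h2 h3 hu.
by rewrite /ran_degree /= (agree_off_eq h1 hu) (agree_off_eq h2 hu) (agree_off_eq h3 hu).
Qed.

Lemma face_agree_off_new_faces S f g v : face_agree_off S f g ->
  all2 (face_agree_off S) (new_faces f v) (new_faces g v).
Proof. by case/and3P=> h1 h2 h3; rewrite /= /face_agree_off /= h1 h2 h3 agree_off_refl. Qed.

Lemma deg_count_le k T (S : seq nat) EA EB :
  (forall u, u \notin S -> ran_degree EA u = ran_degree EB u) ->
  deg_count k T EA <= deg_count k T EB + size S.
Proof.
move=> hd; set s := iota 0 (T + 3).
have sub : subpred (fun u => ran_degree EA u == k)
                   (predU (fun u => ran_degree EB u == k) (fun u => u \in S)).
  by move=> u /=; case: (boolP (u \in S)) => [|/hd ->]; rewrite ?orbT ?orbF.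
have hS : count (fun u => u \in S) s <= size S.
  rewrite -size_filter uniq_leq_size ?filter_uniq ?iota_uniq //.
  by move=> u; rewrite mem_filter => /andP[].
apply: (leq_trans (sub_count sub s)).
rewrite -(leq_add2r (count (predI (fun u => ran_degree EB u == k) (fun u => u \in S)) s)).
by rewrite count_predUI -addnA leq_add2l (leq_trans hS) ?leq_addr.
Qed.

Lemma future_sum_couple k T (S : seq nat) r n LA EA LB EB :
  all2 (face_agree_off S) LA LB ->
  (forall u, u \notin S -> ran_degree EA u = ran_degree EB u) ->
  future_sum k T r n (LA, EA) <= future_sum k T r n (LB, EB) + size S * size (ran_future n r).
Proof.
elim: r n LA EA LB EB => [|r IH] n LA EA LB EB hL hE.
  by rewrite !future_sum0 muln1; apply: deg_count_le.
have hf i : face_agree_off S (nth (0, 1, 2) LA i) (nth (0, 1, 2) LB i).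
  by apply: all2_nth hL; apply: face_agree_off_refl.
have -> : size S * size (ran_future n r.+1) =
          \sum_(i <- iota 0 (2 * n).+1) size S * size (ran_future n.+1 r).
  by rewrite big_const_seq count_predT size_iota iter_addn_0 size_ran_future_S mulnCA mulnC.
rewrite !future_sumS -big_split.
apply: leq_sum => i _; rewrite !ran_stepE; apply: IH.
  rewrite !catA; apply: all2_cat; last exact: face_agree_off_new_faces.
  by apply: all2_cat; [apply: all2_take | apply: all2_drop].
by move=> u hu; rewrite !ran_degree_cat (hE u hu) (ran_degree_new_edges _ (hf i) hu).
Qed.

Definition corners (f g : nat * nat * nat) : seq nat :=
  [:: f.1.1; f.1.2; f.2; g.1.1; g.1.2; g.2].

Lemma face_agree_off_corners f g :
  face_agree_off (corners f g) f g /\ face_agree_off (corners f g) g f.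
Proof. by rewrite /face_agree_off /agree_off /corners !inE !eqxx !orbT. Qed.

Lemma future_sum_step_le k T r n (L : seq (nat * nat * nat)) E a b :
  size L = (2 * n).+1 -> a < size L -> b < size L ->
  future_sum k T r n.+1 (ran_step n (L, E) a) <=
  future_sum k T r n.+1 (ran_step n (L, E) b) + 6 * size (ran_future n.+1 r).
Proof.
move=> hs ha hb; set fa := nth (0, 1, 2) L a; set fb := nth (0, 1, 2) L b.
set v := n + 3.
have [fa_fb fb_fa] := face_agree_off_corners fa fb.
have size_next f : f \in L -> size (rem f L ++ new_faces f v) = (2 * n.+1).+1.
  by move=> hf; rewrite size_cat size_rem // hs /=; lia.
have step_perm i : i < size L ->
    future_sum k T r n.+1 (ran_step n (L, E) i) =
    future_sum k T r n.+1 (rem (nth (0, 1, 2) L i) L ++ new_faces (nth (0, 1, 2) L i) v,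
                          new_edges (nth (0, 1, 2) L i) v ++ E).
  move=> hi; rewrite ran_stepE; apply: future_sum_perm.
    by rewrite catA perm_cat2r perm_take_drop_rem.
  by rewrite !size_cat size_take size_drop hi hs /=; lia.
rewrite (step_perm _ ha) (step_perm _ hb) -/fa -/fb.
have [<-|fa_neq_fb] := eqVneq fa fb; first exact: leq_addr.
(* Reorder both face lists so that they differ only in their heads and in
   the three new faces. *)
set M := rem fb (rem fa L).
have fa_in : fa \in L by apply: mem_nth.
have fb_in : fb \in L by apply: mem_nth.
have perm_a : perm_eq (rem fa L) (fb :: M).
  by apply/perm_to_rem/rem_mem; rewrite 1?eq_sym.
have perm_b : perm_eq (rem fb L) (fa :: M).
  have perm_L : perm_eq L (fa :: fb :: M).
    by apply: perm_trans (perm_to_rem fa_in) _; rewrite perm_cons.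
  by have := perm_rem fb perm_L; rewrite /= (negbTE fa_neq_fb) eqxx.
rewrite (@future_sum_perm _ _ _ _ _ (fb :: M ++ new_faces fa v) _ _ (size_next _ fa_in));
  last by rewrite -cat_cons perm_cat2r.
rewrite (@future_sum_perm _ _ _ _ _ (fa :: M ++ new_faces fb v) _ _ (size_next _ fb_in));
  last by rewrite -cat_cons perm_cat2r.
apply: (future_sum_couple _ _ (S := corners fa fb)).
  rewrite /= fb_fa all2_cat ?face_agree_off_new_faces //.
  by apply: all2_refl; apply: face_agree_off_refl.
by move=> u hu; rewrite !ran_degree_cat (ran_degree_new_edges _ fa_fb hu).
Qed.

Local Open Scope ring_scope.

Lemma sumr_const_seq (R : pzSemiRingType) (I : Type) (s : seq I) (c : R) :
  \sum_(x <- s) c = (size s)%:R * c.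
Proof. by rewrite big_const_seq count_predT iter_addr_0 mulr_natl. Qed.

Lemma sum_sqr_shift (R : comPzRingType) (I : Type) (s : seq I) (f : I -> R) (mu M : R) :
  \sum_(x <- s) f x = (size s)%:R * mu ->
  \sum_(x <- s) (f x - M) ^+ 2 =
  \sum_(x <- s) (f x - mu) ^+ 2 + (size s)%:R * (mu - M) ^+ 2.
Proof.
move=> hmu.
have e x : (f x - M) ^+ 2 = (f x - mu) ^+ 2 + (f x - mu) * (2 * (mu - M)) + (mu - M) ^+ 2.
  by ring.
under eq_bigr do rewrite e.
by rewrite !big_split /= -mulr_suml sumrB hmu !sumr_const_seq; ring.
Qed.

Lemma dev_mean_le (R : realDomainType) (I : eqType) (s : seq I) (f : I -> R)
    (mu c : R) x :
  \sum_(y <- s) f y = (size s)%:R * mu ->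
  (forall y z, y \in s -> z \in s -> f y - f z <= c) -> x \in s ->
  `|f x - mu| <= c.
Proof.
move=> hmu hc xs; have n_gt0 : 0 < (size s)%:R :> R by rewrite ltr0n; case: s xs {hmu hc}.
rewrite -(ler_pM2l n_gt0) -[X in X * _]gtr0_norm // -normrM.
have -> : (size s)%:R * (f x - mu) = \sum_(y <- s) (f x - f y).
  by rewrite sumrB sumr_const_seq hmu mulrBr.
apply: le_trans (ler_norm_sum _ _ _) _.
rewrite -sumr_const_seq big_seq [X in _ <= X]big_seq; apply: ler_sum => y ys.
by rewrite ler_norml lerNl opprB !hc.
Qed.

Lemma count_ler_sum (R : numDomainType) (I : Type) (s : seq I) (P : pred I)
    (f : I -> R) (c : R) :
  (forall x, 0 <= f x) -> (forall x, P x -> c <= f x) ->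
  (count P s)%:R * c <= \sum_(x <- s) f x.
Proof.
move=> f_ge0 hc; elim: s => [|x s IH]; first by rewrite big_nil mul0r.
rewrite big_cons /= natrD mulrDl lerD //.
by case: (boolP (P x)) => [/hc|_]; rewrite ?mul1r ?mul0r.
Qed.

Section Variance.
Variable R : realFieldType.

Definition future_mean (k T r n : nat) (st : ran_state) : R :=
  (future_sum k T r n st)%:R / (size (ran_future n r))%:R.

Lemma size_ran_future_neq0 n r : (size (ran_future n r))%:R != 0 :> R.
Proof. by rewrite pnatr_eq0 -lt0n size_ran_future_gt0. Qed.

Lemma sum_future_Z k T r n st :
  \sum_(c <- ran_future n r) (future_Z k T n st c)%:R =
  (size (ran_future n r))%:R * future_mean k T r n st.
Proof. by rewrite /future_mean mulrC divfK ?size_ran_future_neq0 // natr_sum. Qed.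

Lemma sum_future_mean_step k T r n st :
  \sum_(a <- iota 0 (2 * n).+1) future_mean k T r n.+1 (ran_step n st a) =
  ((2 * n).+1)%:R * future_mean k T r.+1 n st.
Proof.
have K_neq0 := size_ran_future_neq0 n.+1 r.
rewrite /future_mean future_sumS size_ran_future_S natr_sum -mulr_suml natrM.
field; rewrite K_neq0 lt0r_neq0 //; have := ler0n R n; lra.
Qed.

Lemma future_mean_step_le k T r n (L : seq (nat * nat * nat)) E a b :
  size L = (2 * n).+1 -> (a < size L)%N -> (b < size L)%N ->
  future_mean k T r n.+1 (ran_step n (L, E) a) -
  future_mean k T r n.+1 (ran_step n (L, E) b) <= 6.
Proof.
move=> hs ha hb; have K_gt0 : 0 < (size (ran_future n.+1 r))%:R :> R.
  by rewrite ltr0n size_ran_future_gt0.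
rewrite /future_mean -mulrBl ler_pdivrMr // lerBlDl -natrM -natrD ler_nat.
exact: future_sum_step_le.
Qed.

Lemma size_ran_step n st a : size st.1 = (2 * n).+1 -> (a < (2 * n).+1)%N ->
  size (ran_step n st a).1 = (2 * n.+1).+1.
Proof.
case: st => L E /= hs ha; rewrite ran_stepE /= !size_cat size_take size_drop hs ha /=.
lia.
Qed.

Lemma future_var_le k T r n st : size st.1 = (2 * n).+1 ->
  \sum_(c <- ran_future n r) ((future_Z k T n st c)%:R - future_mean k T r n st) ^+ 2 <=
  36 * r%:R * (size (ran_future n r))%:R.
Proof.
elim: r n st => [|r IH] n st hs.
  by rewrite /future_mean future_sum0 big_seq1 divr1 subrr expr0n mulr0 mul0r.
set K := (size (ran_future n.+1 r))%:R : R.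
set M := future_mean k T r.+1 n st.
pose m a := future_mean k T r n.+1 (ran_step n st a).
have step_dev a : a \in iota 0 (2 * n).+1 -> (m a - M) ^+ 2 <= 36.
  move=> ha; have -> : 36 = 6 ^+ 2 :> R by rewrite -natrX.
  rewrite -real_normK ?num_real // ler_sqr ?nnegrE //.
  apply: (dev_mean_le (s := iota 0 (2 * n).+1)) ha.
    by rewrite size_iota sum_future_mean_step.
  rewrite /m; case: st hs {M m} => L E hs y z; rewrite !mem_iota -hs.
  exact: future_mean_step_le.
rewrite big_ran_future_S size_ran_future_S natrM -/K.
have -> : 36 * r.+1%:R * (((2 * n).+1)%:R * K) =
          \sum_(a <- iota 0 (2 * n).+1) (36 * r%:R * K + K * 36).
  by rewrite sumr_const_seq size_iota -addn1 natrD; ring.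
rewrite big_seq [X in _ <= X]big_seq; apply: ler_sum => a ha.
have a_lt : (a < (2 * n).+1)%N by move: ha; rewrite mem_iota.
rewrite (sum_sqr_shift (mu := m a)); last exact: sum_future_Z.
apply: lerD; first exact/IH/size_ran_step.
by rewrite ler_pM2l ?step_dev // ltr0n size_ran_future_gt0.
Qed.

End Variance.

Lemma ranZ_future k t c : c \in ran_future 0 t -> ranZ k c = future_Z k t 0 ran_init c.
Proof. by move=> hc; rewrite /ranZ /future_Z (size_mem_ran_future hc). Qed.

Lemma ran_expect_ranZ (R : realType) k t :
  ran_expect R t (ranZ k) = future_mean R k t t 0 ran_init.
Proof.
rewrite /ran_expect /future_mean ran_choicesE natr_sum; congr (_ / _).
by apply: eq_big_seq => c hc; rewrite (ranZ_future _ hc).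
Qed.

Lemma ranZ_chebyshev (R : realType) k t (d : R) : 0 < d ->
  ran_prob R t (fun cs => d <= `|(ranZ k cs)%:R - ran_expect R t (ranZ k)|) <=
  36 * t%:R / d ^+ 2.
Proof.
move=> d_gt0; rewrite /ran_prob ran_expect_ranZ ran_choicesE.
set mu := future_mean R k t t 0 ran_init.
have N_gt0 : 0 < (size (ran_future 0 t))%:R :> R by rewrite ltr0n size_ran_future_gt0.
rewrite ler_pdivrMr // mulrAC ler_pdivlMr ?exprn_gt0 //.
apply: le_trans (@future_var_le R k t t 0 ran_init erefl).
rewrite -(@eq_in_count _ (fun c => d <= `|(future_Z k t 0 ran_init c)%:R - mu|)); last first.
  by move=> c hc /=; rewrite (ranZ_future _ hc).
apply: count_ler_sum => [c|c /= hc]; first exact: sqr_ge0.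
by rewrite -[X in _ <= X]real_normK ?num_real // ler_sqr ?nnegrE ?(ltW d_gt0).
Qed.

Local Open Scope classical_set_scope.

Theorem mainTheorem5 (R : realType) (k : nat) (hk : (3 <= k)%N) :
  (fun t : nat =>
     ran_prob R t (fun cs =>
       Num.sqrt (t%:R * ln (t%:R : R)) <= `| (ranZ k cs)%:R - ran_expect R t (ranZ k) |))
  @ \oo --> (0 : R^o).
Proof.
apply/cvgrPdist_le => e e_gt0.
apply: filterS (nbhs_infty_ger (expR (36 / e) + 2)) => t ht.
have t_ge2 : (2 <= t)%N by rewrite -(ler_nat R); have := expR_gt0 (36 / e); lra.
have t_gt0 : 0 < t%:R :> R by rewrite ltr0n; lia.
have ln_gt0 : 0 < ln (t%:R : R) by rewrite ln_gt0 // ltr1n.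
have ln_ge : 36 / e <= ln (t%:R : R).
  by rewrite -[X in X <= _]expRK ler_ln ?posrE ?expR_gt0 //; lra.
have tln_gt0 : 0 < t%:R * ln (t%:R : R) by rewrite mulr_gt0.
rewrite sub0r normrN ger0_norm ?divr_ge0 //.
have d_gt0 : 0 < Num.sqrt (t%:R * ln (t%:R : R)) by rewrite sqrtr_gt0.
apply: le_trans (ranZ_chebyshev k t d_gt0) _.
rewrite sqr_sqrtr ?ler_pdivrMr ?(ltW tln_gt0) //.
rewrite ler_pdivrMr // in ln_ge; nra.
Qed.
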